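(* For all $0\le t<1$, $$\lim_{x\uparrow B^*\sqrt{1-t}}\frac{\partial}{\partial x}J^*(t,x)=\lim_{x\downarrow B^*\sqrt{1-t}}\frac{\partial}{\partial x}g(t,x),$$ $$\lim_{x\downarrow -B^*\sqrt{1-t}}\frac{\partial}{\partial x}J^*(t,x)=\lim_{x\uparrow -B^*\sqrt{1-t}}\frac{\partial}{\partial x}g(t,x),$$ where $$J^*(t,x)=\begin{cases}(1-t)^{n+1/2}(F_{2n+1}+G_{2n+1})(x/\sqrt{1-t})\,j(B^* ), & |x|<B^*\sqrt{1-t},\\ g(t,x), & |x|\ge B^*\sqrt{1-t}.\end{cases}$$
   Context: $n\ge0$ is an integer. $F_q(y):=\int_0^\infty u^{q-1}e^{yu-u^2/2}\,\mathrm{d}u$ and $G_q(y):=F_q(-y)$. $B^*>0$ is the unique zero of $B\mapsto(2n+1)-BF'_{2n+1}(B)/F_{2n+1}(B)$. $U(t,x)=(1-t)^{n+1/2}(B^* )^{2n+1}F_{2n+1}(x/\sqrt{1-t})/F_{2n+1}(B^* )$ if $x<B^*\sqrt{1-t}$, and $U(t,x)=x^{2n+1}$ otherwise. $g(t,x):=(U(t,x)-x^{2n+1})1_{\{x\le0\}}+(U(t,-x)+x^{2n+1})1_{\{x>0\}}$. $j(D):=\frac{1}{(F_{2n+1}+G_{2n+1})(D)}[D^{2n+1}+(B^* )^{2n+1}G_{2n+1}(D)/F_{2n+1}(B^* )]$. *)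

From Stdlib Require Import Reals.
From Coquelicot Require Import Coquelicot.
Open Scope R_scope.

Definition Fq (q : nat) (y : R) : R :=
  RInt_gen (fun u => u ^ (q - 1) * exp (y * u - u ^ 2 / 2))
           (at_point 0) (Rbar_locally p_infty).

Definition Gq (q : nat) (y : R) : R := Fq q (- y).

(* B* is characterised by: B* > 0 and (2n+1) - B F'_{2n+1}(B)/F_{2n+1}(B) = 0 *)
Definition Bstar_eq (n : nat) (B : R) : R :=
  INR (2 * n + 1) - B * Derive (Fq (2 * n + 1)) B / Fq (2 * n + 1) B.

Definition U (n : nat) (Bs t x : R) : R :=
  if Rlt_dec x (Bs * sqrt (1 - t)) then
    Rpower (1 - t) (INR n + / 2) * Bs ^ (2 * n + 1)
      * Fq (2 * n + 1) (x / sqrt (1 - t)) / Fq (2 * n + 1) Bs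
  else x ^ (2 * n + 1).

Definition g (n : nat) (Bs t x : R) : R :=
  if Rle_dec x 0 then U n Bs t x - x ^ (2 * n + 1)
  else U n Bs t (- x) + x ^ (2 * n + 1).

Definition j (n : nat) (Bs D : R) : R :=
  / (Fq (2 * n + 1) D + Gq (2 * n + 1) D)
  * (D ^ (2 * n + 1) + Bs ^ (2 * n + 1) * Gq (2 * n + 1) D / Fq (2 * n + 1) Bs).

Definition Jstar (n : nat) (Bs t x : R) : R :=
  if Rlt_dec (Rabs x) (Bs * sqrt (1 - t)) then
    Rpower (1 - t) (INR n + / 2)
      * (Fq (2 * n + 1) (x / sqrt (1 - t)) + Gq (2 * n + 1) (x / sqrt (1 - t)))
      * j n Bs Bs
  else g n Bs t x.

From Stdlib Require Import Reals Lra Lia Classical_Prop.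
From Coquelicot Require Import Coquelicot.
Open Scope R_scope.

(* Write [b = Bs sqrt(1-t)] and [A x] for the formula of [U(t,x)] on [x < b]. On
   [|x| < b] one has [J* = A x + A (-x)], while [g = A (-x) + x^(2n+1)] for [x > 0]
   and [g = A x - x^(2n+1)] for [x < 0]. The expansion
   [u^m e^(yu - u^2/2) = e^(y^2/2) sum_k C(m,k) y^(m-k) (u-y)^k e^(-(u-y)^2/2)]
   writes [F_q] through Gaussian integrals with variable endpoint, so [F_q] is [C^1]
   (and positive). Hence all four one-sided limits are values at [±b] of derivatives
   of these [C^1] expressions, and the two sides agree by the smooth-fit identity
   [A'(b) = (2n+1) b^(2n)], which is the equation [Bs F'(Bs) = (2n+1) F(Bs)] defining
   [Bs]. *)

Lemma ex_derive_continuous_R (f : R -> R) x : ex_derive f x -> continuous f x.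
Proof. apply (ex_derive_continuous (K := R_AbsRing) (V := R_NormedModule)). Qed.

Definition is_C1 (f : R -> R) : Prop :=
  exists f' : R -> R, (forall x, is_derive f x (f' x)) /\ (forall x, continuous f' x).

Lemma is_C1_ex_derive f x : is_C1 f -> ex_derive f x.
Proof. intros [f' [Hf _]]. exists (f' x). apply Hf. Qed.

Lemma is_C1_continuous f x : is_C1 f -> continuous f x.
Proof. intros Hf. apply ex_derive_continuous_R, is_C1_ex_derive, Hf. Qed.

Lemma is_C1_continuous_Derive f x : is_C1 f -> continuous (Derive f) x.
Proof.
  intros [f' [Hf Cf]]. apply (continuous_ext f'); [|apply Cf].
  intros y. symmetry. apply is_derive_unique, Hf.
Qed.

Lemma is_C1_ext f g : (forall x, f x = g x) -> is_C1 f -> is_C1 g.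
Proof.
  intros Hfg [f' [Hf Cf]]. exists f'. split; [| exact Cf].
  intros x. apply (is_derive_ext f); auto.
Qed.

Lemma is_C1_const c : is_C1 (fun _ => c).
Proof. exists (fun _ => 0). split; intros x; [auto_derive; auto | apply continuous_const]. Qed.

Lemma is_C1_id : is_C1 (fun x => x).
Proof. exists (fun _ => 1). split; intros x; [auto_derive; auto | apply continuous_const]. Qed.

Lemma is_C1_exp : is_C1 exp.
Proof.
  exists exp. split; intros x; [auto_derive; auto; ring |].
  apply ex_derive_continuous_R. auto_derive. auto.
Qed.

Lemma is_C1_plus f g : is_C1 f -> is_C1 g -> is_C1 (fun x => f x + g x).
Proof.
  intros [f' [Hf Cf]] [g' [Hg Cg]]. exists (fun x => f' x + g' x).
  split; intros x; [apply (is_derive_plus f g) | apply (continuous_plus f' g')]; auto.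
Qed.

Lemma is_C1_opp f : is_C1 f -> is_C1 (fun x => - f x).
Proof.
  intros [f' [Hf Cf]]. exists (fun x => - f' x).
  split; intros x; [apply (is_derive_opp f) | apply (continuous_opp f')]; auto.
Qed.

Lemma is_C1_mult f g : is_C1 f -> is_C1 g -> is_C1 (fun x => f x * g x).
Proof.
  intros Hf0 Hg0. pose proof (fun x => is_C1_continuous f x Hf0) as Kf.
  pose proof (fun x => is_C1_continuous g x Hg0) as Kg.
  destruct Hf0 as [f' [Hf Cf]], Hg0 as [g' [Hg Cg]].
  exists (fun x => f' x * g x + f x * g' x). split; intros x.
  - apply (is_derive_mult f g); auto. intros; apply Rmult_comm.
  - apply (continuous_plus (fun x => f' x * g x) (fun x => f x * g' x));
      [apply (continuous_mult f' g) | apply (continuous_mult f g')]; auto.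
Qed.

Lemma is_C1_comp f g : is_C1 f -> is_C1 g -> is_C1 (fun x => f (g x)).
Proof.
  intros [f' [Hf Cf]] Hg0. pose proof (fun x => is_C1_continuous g x Hg0) as Kg.
  destruct Hg0 as [g' [Hg Cg]].
  exists (fun x => g' x * f' (g x)). split; intros x.
  - apply (is_derive_comp f g); auto.
  - apply (continuous_mult g' (fun x => f' (g x))); auto.
    apply (continuous_comp g f'); auto.
Qed.

Lemma is_C1_pow p : is_C1 (fun x => x ^ p).
Proof.
  induction p as [|p IH]; [exact (is_C1_const 1) |].
  apply (is_C1_mult (fun x => x) (fun x => x ^ p)); [apply is_C1_id | exact IH].
Qed.

Lemma is_C1_sum_f_R0 (f : nat -> R -> R) N :
  (forall k, is_C1 (f k)) -> is_C1 (fun x => sum_f_R0 (fun k => f k x) N).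
Proof.
  intros Hf. induction N as [|N IH]; [apply Hf |].
  apply (is_C1_plus (fun x => sum_f_R0 (fun k => f k x) N) (f (S N))); auto.
Qed.

Lemma is_C1_RInt f a : (forall x, continuous f x) -> is_C1 (fun x => RInt f a x).
Proof.
  intros Cf. exists f. split; [intros x | exact Cf].
  apply (is_derive_RInt f _ a); [| apply Cf].
  apply filter_forall. intros b. apply RInt_correct, ex_RInt_continuous. intros; apply Cf.
Qed.

Lemma incr_bounded_ex_finite_lim (G : R -> R) (B : R) :
  (forall x y, 0 <= x -> x <= y -> G x <= G y) ->
  (forall x, 0 <= x -> G x <= B) ->
  ex_finite_lim G p_infty.
Proof.
  intros Hincr Hbnd.
  set (E := fun r => exists x, 0 <= x /\ r = G x).
  assert (HE : bound E) by (exists B; intros r [x [Hx ->]]; now apply Hbnd).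
  assert (HE0 : exists r, E r) by (exists (G 0), 0; split; [lra | reflexivity]).
  destruct (completeness E HE HE0) as [L [HubL HlubL]].
  exists L. intros P [eps HP].
  assert (Hx0 : exists x0, 0 <= x0 /\ L - eps < G x0).
  { apply NNPP. intros Hno.
    assert (L <= L - eps); [| destruct eps; simpl in *; lra].
    apply HlubL. intros r [x [Hx ->]]. apply Rnot_lt_le. intros Hlt.
    apply Hno. exists x. auto. }
  destruct Hx0 as [x0 [Hx0 Hlt]].
  exists x0. intros x Hx. apply HP.
  assert (G x0 <= G x) by (apply Hincr; lra).
  assert (G x <= L) by (apply HubL; exists x; split; [lra | reflexivity]).
  change (Rabs (G x - L) < eps). apply Rabs_lt_between'. lra.
Qed.

Lemma is_RInt_gen_of_is_lim (f : R -> R) (a l : R) :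
  (forall b, ex_RInt f a b) ->
  is_lim (fun b => RInt f a b) p_infty l ->
  is_RInt_gen f (at_point a) (Rbar_locally p_infty) l.
Proof.
  intros Hex Hlim.
  apply (filterlimi_lim_ext_loc (fun ab => RInt f (fst ab) (snd ab))).
  - exists (fun x => x = a) (fun _ => True); [reflexivity | exists 0; auto |].
    intros x y -> _. exact (RInt_correct f a y (Hex y)).
  - intros P HP.
    exists (fun x => x = a) (fun b => P (RInt f a b)); [reflexivity | exact (Hlim P HP) |].
    intros x y -> Hy. exact Hy.
Qed.

Lemma ex_RInt_sum_f_R0 (f : nat -> R -> R) N a b :
  (forall k, ex_RInt (f k) a b) -> ex_RInt (fun u => sum_f_R0 (fun k => f k u) N) a b.
Proof.
  intros Hf. induction N as [|N IH]; [apply Hf |].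
  apply (ex_RInt_plus (V := R_CompleteNormedModule)); auto.
Qed.

Lemma RInt_sum_f_R0 (f : nat -> R -> R) N a b :
  (forall k, ex_RInt (f k) a b) ->
  RInt (fun u => sum_f_R0 (fun k => f k u) N) a b = sum_f_R0 (fun k => RInt (f k) a b) N.
Proof.
  intros Hf. induction N as [|N IH]; [reflexivity |]. simpl.
  rewrite <- IH. apply (RInt_plus (V := R_CompleteNormedModule)); auto.
  now apply ex_RInt_sum_f_R0.
Qed.

Lemma is_lim_sum_f_R0 (f : nat -> R -> R) (l : nat -> R) x N :
  (forall k, is_lim (f k) x (l k)) ->
  is_lim (fun y => sum_f_R0 (fun k => f k y) N) x (sum_f_R0 l N).
Proof.
  intros Hf. induction N as [|N IH]; [apply Hf |].
  apply is_lim_plus'; auto.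
Qed.

Lemma RInt_translate (f : R -> R) (y a b : R) :
  (forall x, continuous f x) ->
  RInt (fun u => f (u - y)) a b = RInt f (a - y) (b - y).
Proof.
  intros Cf.
  pose proof (RInt_comp_lin f 1 (- y) a b) as Hlin.
  replace (1 * a + - y) with (a - y) in Hlin by ring.
  replace (1 * b + - y) with (b - y) in Hlin by ring.
  rewrite <- Hlin by (apply (ex_RInt_continuous (V := R_CompleteNormedModule)); auto).
  apply RInt_ext. intros u _. change (scal 1 ?z) with (1 * z).
  rewrite Rmult_1_l. f_equal. ring.
Qed.

Definition gauss_weight (k : nat) (v : R) : R := v ^ k * exp (- (v ^ 2) / 2).

Lemma gauss_weight_continuous k x : continuous (gauss_weight k) x.
Proof. apply ex_derive_continuous_R. unfold gauss_weight. auto_derive. auto. Qed.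

Lemma ex_RInt_gauss_weight k a b : ex_RInt (gauss_weight k) a b.
Proof.
  apply (ex_RInt_continuous (V := R_CompleteNormedModule)).
  intros; apply gauss_weight_continuous.
Qed.

Lemma gauss_weight_ge0 k v : 0 <= v -> 0 <= gauss_weight k v.
Proof. intros Hv. apply Rmult_le_pos; [now apply pow_le | apply Rlt_le, exp_pos]. Qed.

Lemma pow_le_fact_exp k v : 0 <= v -> v ^ k <= INR (Factorial.fact k) * exp v.
Proof.
  intros Hv. assert (Hfact : 0 < INR (Factorial.fact k)) by apply INR_fact_lt_0.
  assert (Hterm : v ^ k / INR (Factorial.fact k) <= exp v).
  { eapply Rle_trans; [| exact (exp_ge_taylor v k Hv)].
    destruct k as [|k]; simpl; [lra |].
    enough (0 <= sum_f_R0 (fun i => v ^ i / INR (Factorial.fact i)) k) by lra.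
    apply cond_pos_sum. intros i.
    apply Rmult_le_pos; [now apply pow_le | apply Rlt_le, Rinv_0_lt_compat, INR_fact_lt_0]. }
  replace (v ^ k) with (INR (Factorial.fact k) * (v ^ k / INR (Factorial.fact k))) by (field; lra).
  apply Rmult_le_compat_l; lra.
Qed.

(* [v^k <= k! e^v] and [v - v^2/2 <= 2 - v]. *)
Lemma gauss_weight_le_exp k v :
  0 <= v -> gauss_weight k v <= INR (Factorial.fact k) * exp 2 * exp (- v).
Proof.
  intros Hv. unfold gauss_weight.
  apply Rle_trans with (INR (Factorial.fact k) * exp v * exp (- (v ^ 2) / 2)).
  { apply Rmult_le_compat_r; [apply Rlt_le, exp_pos | now apply pow_le_fact_exp]. }
  rewrite !Rmult_assoc, <- !exp_plus.
  apply Rmult_le_compat_l; [apply pos_INR |].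
  assert (Hexp : v + - (v ^ 2) / 2 <= 2 + - v) by (pose proof (pow2_ge_0 (v - 2)); nra).
  destruct Hexp as [Hlt | ->]; [apply Rlt_le, exp_increasing, Hlt | lra].
Qed.

Lemma RInt_scal_exp_opp K M : RInt (fun v => K * exp (- v)) 0 M = K - K * exp (- M).
Proof.
  apply is_RInt_unique.
  replace (K - K * exp (- M)) with ((- K * exp (- M)) - (- K * exp (- 0)))
    by (rewrite Ropp_0, exp_0; ring).
  apply (is_RInt_derive (fun v => - K * exp (- v))); intros x _.
  - auto_derive; auto. ring.
  - apply ex_derive_continuous_R. auto_derive. auto.
Qed.

Lemma ex_finite_lim_RInt_gauss_weight k :
  ex_finite_lim (fun M => RInt (gauss_weight k) 0 M) p_infty.
Proof.
  apply incr_bounded_ex_finite_lim with (B := INR (Factorial.fact k) * exp 2).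
  - intros x y Hx Hxy.
    rewrite <- (RInt_Chasles (gauss_weight k) 0 x y) by apply ex_RInt_gauss_weight.
    assert (0 <= RInt (gauss_weight k) x y); [| change (plus ?a ?b) with (a + b); lra].
    apply RInt_ge_0; [exact Hxy | apply ex_RInt_gauss_weight |].
    intros z Hz. apply gauss_weight_ge0. lra.
  - intros x Hx. eapply Rle_trans.
    + apply (RInt_le _ (fun v => INR (Factorial.fact k) * exp 2 * exp (- v)));
        [exact Hx | apply ex_RInt_gauss_weight | |].
      * apply (ex_RInt_continuous (V := R_CompleteNormedModule)). intros z _.
        apply ex_derive_continuous_R. auto_derive. auto.
      * intros z Hz. apply gauss_weight_le_exp. lra.
    + rewrite RInt_scal_exp_opp.
      pose proof (exp_pos 2). pose proof (exp_pos (- x)). pose proof (pos_INR (Factorial.fact k)).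
      enough (0 <= INR (Factorial.fact k) * exp 2 * exp (- x)) by lra.
      repeat apply Rmult_le_pos; lra.
Qed.

Definition half_gauss_moment (k : nat) : R :=
  real (Lim (fun M => RInt (gauss_weight k) 0 M) p_infty).

Lemma is_lim_RInt_gauss_weight k :
  is_lim (fun M => RInt (gauss_weight k) 0 M) p_infty (half_gauss_moment k).
Proof. apply Lim_correct', ex_finite_lim_RInt_gauss_weight. Qed.

Definition gauss_integrand (m : nat) (y u : R) : R := u ^ m * exp (y * u - u ^ 2 / 2).

Lemma gauss_integrand_continuous m y u : continuous (gauss_integrand m y) u.
Proof. apply ex_derive_continuous_R. unfold gauss_integrand. auto_derive. auto. Qed.

Lemma ex_RInt_gauss_integrand m y a b : ex_RInt (gauss_integrand m y) a b.
Proof.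
  apply (ex_RInt_continuous (V := R_CompleteNormedModule)).
  intros; apply gauss_integrand_continuous.
Qed.

Lemma ex_RInt_gauss_weight_translate k y a b :
  ex_RInt (fun u => gauss_weight k (u - y)) a b.
Proof.
  apply (ex_RInt_continuous (V := R_CompleteNormedModule)). intros z _.
  apply (continuous_comp (fun z => z - y)); [| apply gauss_weight_continuous].
  apply ex_derive_continuous_R. auto_derive. auto.
Qed.

(* Expand [u^m = ((u - y) + y)^m] and complete the square in the exponent. *)
Lemma gauss_integrand_expand m y u :
  gauss_integrand m y u =
  sum_f_R0 (fun k => exp (y ^ 2 / 2) * (Binomial.C m k * y ^ (m - k)) * gauss_weight k (u - y)) m.
Proof.
  unfold gauss_integrand, gauss_weight.
  replace (u ^ m) with (((u - y) + y) ^ m) by (f_equal; ring).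
  replace (exp (y * u - u ^ 2 / 2)) with (exp (y ^ 2 / 2) * exp (- ((u - y) ^ 2) / 2))
    by (rewrite <- exp_plus; f_equal; field).
  rewrite binomial, Rmult_comm, scal_sum. apply sum_eq. intros k _. ring.
Qed.

Lemma RInt_gauss_integrand m y M :
  RInt (gauss_integrand m y) 0 M =
  exp (y ^ 2 / 2) * sum_f_R0 (fun k => Binomial.C m k * y ^ (m - k) *
    (RInt (gauss_weight k) 0 (M - y) - RInt (gauss_weight k) 0 (- y))) m.
Proof.
  rewrite (RInt_ext _ _ _ _ (fun u _ => gauss_integrand_expand m y u)).
  rewrite RInt_sum_f_R0.
  2:{ intros k. apply (ex_RInt_scal (fun u => gauss_weight k (u - y))).
      apply ex_RInt_gauss_weight_translate. }
  rewrite scal_sum. apply sum_eq. intros k _.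
  rewrite (RInt_scal (fun u => gauss_weight k (u - y))) by apply ex_RInt_gauss_weight_translate.
  rewrite RInt_translate by apply gauss_weight_continuous.
  rewrite <- (RInt_Chasles (gauss_weight k) 0 (0 - y) (M - y)) by apply ex_RInt_gauss_weight.
  change (scal ?a ?b) with (a * b). change (plus ?a ?b) with (a + b).
  replace (0 - y) with (- y) by ring. ring.
Qed.

Definition Fq_closed_form (m : nat) (y : R) : R :=
  exp (y ^ 2 / 2) * sum_f_R0 (fun k => Binomial.C m k * y ^ (m - k) *
    (half_gauss_moment k - RInt (gauss_weight k) 0 (- y))) m.

Lemma is_lim_RInt_gauss_integrand m y :
  is_lim (fun M => RInt (gauss_integrand m y) 0 M) p_infty (Fq_closed_form m y).
Proof.
  eapply is_lim_ext; [intros M; symmetry; apply RInt_gauss_integrand |].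
  apply (is_lim_scal_l _ _ p_infty (Finite _)), is_lim_sum_f_R0. intros k.
  apply (is_lim_scal_l _ _ p_infty (Finite _)), is_lim_minus'; [| apply is_lim_const].
  apply (is_lim_comp (fun M => RInt (gauss_weight k) 0 M) (fun M => M - y) p_infty _ p_infty).
  - apply is_lim_RInt_gauss_weight.
  - eapply is_lim_minus; [apply is_lim_id | apply is_lim_const | reflexivity].
  - exists 0. discriminate.
Qed.

Lemma Fq_eq_closed_form q y : Fq q y = Fq_closed_form (q - 1) y.
Proof.
  apply is_RInt_gen_unique, is_RInt_gen_of_is_lim.
  - apply ex_RInt_gauss_integrand.
  - apply is_lim_RInt_gauss_integrand.
Qed.

Lemma is_C1_Fq q : is_C1 (Fq q).
Proof.
  apply (is_C1_ext (Fq_closed_form (q - 1))); [intros y; symmetry; apply Fq_eq_closed_form |].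
  apply (is_C1_mult (fun y => exp (y ^ 2 / 2))).
  - apply (is_C1_comp exp (fun y => y ^ 2 / 2)); [apply is_C1_exp |].
    apply (is_C1_mult (fun y => y ^ 2)); [apply is_C1_pow | apply is_C1_const].
  - apply is_C1_sum_f_R0. intros k.
    apply (is_C1_mult (fun y => Binomial.C (q - 1) k * y ^ (q - 1 - k))).
    + apply (is_C1_mult (fun _ => _)); [apply is_C1_const | apply is_C1_pow].
    + apply (is_C1_plus (fun _ => _) (fun y => - RInt (gauss_weight k) 0 (- y)));
        [apply is_C1_const |].
      apply is_C1_opp, (is_C1_comp (fun x => RInt (gauss_weight k) 0 x));
        [| apply is_C1_opp, is_C1_id].
      apply is_C1_RInt, gauss_weight_continuous.
Qed.

Lemma Fq_pos q y : 0 < Fq q y.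
Proof.
  rewrite Fq_eq_closed_form.
  set (I := RInt (gauss_integrand (q - 1) y)).
  assert (H01 : 0 < I 0 1).
  { apply RInt_gt_0; [lra | | intros; apply gauss_integrand_continuous].
    intros u Hu. apply Rmult_lt_0_compat; [apply pow_lt; lra | apply exp_pos]. }
  enough (Rbar_le (I 0 1) (Fq_closed_form (q - 1) y)) by (simpl in *; lra).
  apply (is_lim_le_loc (fun _ => I 0 1) (fun M => I 0 M) p_infty);
    [| apply is_lim_const | apply is_lim_RInt_gauss_integrand].
  exists 1. intros M HM. unfold I.
  rewrite <- (RInt_Chasles _ 0 1 M) by apply ex_RInt_gauss_integrand.
  change (plus ?a ?b) with (a + b).
  enough (0 <= RInt (gauss_integrand (q - 1) y) 1 M) by lra.
  apply RInt_ge_0; [lra | apply ex_RInt_gauss_integrand |].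
  intros u Hu. apply Rmult_le_pos; [apply pow_le; lra | apply Rlt_le, exp_pos].
Qed.

Lemma Rpower_nat_plus_half x n : 0 < x -> Rpower x (INR n + / 2) = sqrt x ^ (2 * n + 1).
Proof.
  intros Hx. rewrite Rpower_plus, Rpower_pow, Rpower_sqrt, pow_add, pow_mult, pow2_sqrt by lra.
  ring.
Qed.

Lemma filterlim_Derive_ext_open (f h : R -> R) (U : R -> Prop) (a : R)
  (F : (R -> Prop) -> Prop) {FF : Filter F} :
  filter_le F (locally a) -> open U -> (forall x, U x -> f x = h x) -> F U ->
  continuous (Derive h) a -> filterlim (fun x => Derive f x) F (locally (Derive h a)).
Proof.
  intros HFa HU Hfh HFU Ch.
  apply (filterlim_ext_loc (Derive h)).
  - apply (filter_imp U); [| exact HFU]. intros x Hx. symmetry. apply Derive_ext_loc.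
    apply (filter_imp U); [exact Hfh | apply HU, Hx].
  - apply (filterlim_filter_le_1 (F := locally a)); [exact HFa | exact Ch].
Qed.

Section SmoothFit.

Variables (n : nat) (Bs t : R).
Hypotheses (hBpos : 0 < Bs) (hBzero : Bstar_eq n Bs = 0) (ht1 : t < 1).

Let F := Fq (2 * n + 1).
Let s := sqrt (1 - t).
Let b := Bs * s.

Definition continuation_value (x : R) : R :=
  Rpower (1 - t) (INR n + / 2) * Bs ^ (2 * n + 1) * F (x / s) / F Bs.

Let A := continuation_value.

Lemma sqrt_one_minus_t_pos : 0 < s.
Proof. apply sqrt_lt_R0. lra. Qed.

Lemma boundary_pos : 0 < b.
Proof. apply Rmult_lt_0_compat; [exact hBpos | exact sqrt_one_minus_t_pos]. Qed.

Lemma Bstar_Derive_eq : Bs * Derive F Bs = INR (2 * n + 1) * F Bs.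
Proof.
  pose proof (Fq_pos (2 * n + 1) Bs) as HF. unfold Bstar_eq in hBzero. fold F in HF, hBzero.
  replace (INR (2 * n + 1)) with (Bs * Derive F Bs / F Bs) by lra.
  field. lra.
Qed.

Lemma is_C1_continuation_value : is_C1 A.
Proof.
  apply (is_C1_mult (fun x => _ * F (x / s))); [| apply is_C1_const].
  apply (is_C1_mult (fun _ => _)); [apply is_C1_const |].
  apply (is_C1_comp F (fun x => x / s)); [apply is_C1_Fq |].
  apply (is_C1_mult (fun x => x)); [apply is_C1_id | apply is_C1_const].
Qed.

Lemma Derive_continuation_value x :
  Derive A x = s ^ (2 * n) * Bs ^ (2 * n + 1) / F Bs * Derive F (x / s).
Proof.
  pose proof (Fq_pos (2 * n + 1) Bs) as HF. pose proof sqrt_one_minus_t_pos. fold F in HF.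
  apply is_derive_unique. unfold A, continuation_value.
  rewrite Rpower_nat_plus_half by lra. fold s.
  auto_derive; [apply (is_C1_ex_derive F), is_C1_Fq |].
  change (n + (n + 0) + 1)%nat with (2 * n + 1)%nat.
  change (Derive (fun y => F y) (x * / s)) with (Derive F (x / s)).
  rewrite pow_add. field. lra.
Qed.

Lemma smooth_fit : Derive A b = INR (2 * n + 1) * b ^ (2 * n).
Proof.
  pose proof (Fq_pos (2 * n + 1) Bs) as HF. pose proof sqrt_one_minus_t_pos. fold F in HF.
  rewrite Derive_continuation_value.
  replace (b / s) with Bs by (unfold b; field; lra).
  replace (Derive F Bs) with (INR (2 * n + 1) * F Bs / Bs)
    by (rewrite <- Bstar_Derive_eq; field; lra).
  unfold b. rewrite Rpow_mult_distr, pow_add. field. lra.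
Qed.

Lemma Jstar_inside x : Rabs x < b -> Jstar n Bs t x = A x + A (- x).
Proof.
  intros Hx.
  pose proof (Fq_pos (2 * n + 1) Bs) as HF. pose proof (Fq_pos (2 * n + 1) (- Bs)) as HF'.
  unfold Jstar. destruct (Rlt_dec _ _) as [_ | Hno]; [| contradiction].
  fold F in HF, HF'. unfold A, continuation_value, j, Gq. fold F s.
  replace (- x / s) with (- (x / s)) by (field; apply Rgt_not_eq, sqrt_one_minus_t_pos).
  field. lra.
Qed.

Lemma g_of_pos x : 0 < x -> g n Bs t x = A (- x) + x ^ (2 * n + 1).
Proof.
  intros Hx. pose proof boundary_pos.
  unfold g, U. destruct (Rle_dec x 0) as [Hle | _]; [lra |].
  destruct (Rlt_dec _ _) as [_ | Hno]; [reflexivity |].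
  exfalso. apply Hno. fold s b. lra.
Qed.

Lemma g_of_neg x : x < 0 -> g n Bs t x = A x - x ^ (2 * n + 1).
Proof.
  intros Hx. pose proof boundary_pos.
  unfold g, U. destruct (Rle_dec x 0) as [_ | Hno]; [| lra].
  destruct (Rlt_dec _ _) as [_ | Hno]; [reflexivity |].
  exfalso. apply Hno. fold s b. lra.
Qed.

Let inside_form (x : R) : R := A x + A (- x).
Let right_form (x : R) : R := A (- x) + x ^ (2 * n + 1).
Let left_form (x : R) : R := A x - x ^ (2 * n + 1).

Lemma Derive_inside_form x : Derive inside_form x = Derive A x - Derive A (- x).
Proof.
  pose proof (fun y => is_C1_ex_derive A y is_C1_continuation_value).
  apply is_derive_unique. unfold inside_form. auto_derive; auto.
  change (fun y : R => A y) with A. ring.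
Qed.

Lemma Derive_right_form x : Derive right_form x = - Derive A (- x) + INR (2 * n + 1) * x ^ (2 * n).
Proof.
  pose proof (fun y => is_C1_ex_derive A y is_C1_continuation_value).
  apply is_derive_unique. unfold right_form. auto_derive; auto.
  change (fun y : R => A y) with A. change (n + (n + 0) + 1)%nat with (2 * n + 1)%nat.
  replace (Init.Nat.pred (2 * n + 1)) with (2 * n)%nat by lia. ring.
Qed.

Lemma Derive_left_form x : Derive left_form x = Derive A x - INR (2 * n + 1) * x ^ (2 * n).
Proof.
  pose proof (fun y => is_C1_ex_derive A y is_C1_continuation_value).
  apply is_derive_unique. unfold left_form. auto_derive; auto.
  change (fun y : R => A y) with A. change (n + (n + 0) + 1)%nat with (2 * n + 1)%nat.
  replace (Init.Nat.pred (2 * n + 1)) with (2 * n)%nat by lia. ring.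
Qed.

Lemma is_C1_local_forms : is_C1 inside_form /\ is_C1 right_form /\ is_C1 left_form.
Proof.
  pose proof is_C1_continuation_value as HA.
  assert (HAopp : is_C1 (fun x => A (- x)))
    by (apply (is_C1_comp A); [exact HA | apply is_C1_opp, is_C1_id]).
  repeat split.
  - apply (is_C1_plus A); assumption.
  - apply (is_C1_plus (fun x => A (- x))); [assumption | apply is_C1_pow].
  - apply (is_C1_plus A (fun x => - x ^ (2 * n + 1))); [assumption | apply is_C1_opp, is_C1_pow].
Qed.

Lemma Derive_one_sided_limits_at_b :
  exists L : R,
    filterlim (fun x => Derive (Jstar n Bs t) x) (at_left b) (locally L) /\
    filterlim (fun x => Derive (g n Bs t) x) (at_right b) (locally L).
Proof.
  pose proof boundary_pos. destruct is_C1_local_forms as [Hin [Hright _]].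
  exists (Derive inside_form b). split.
  - apply (filterlim_Derive_ext_open _ _ (fun x => - b < x < b) b (at_left b));
      [apply filter_le_within | apply open_and; [apply open_gt | apply open_lt] | | |
       apply is_C1_continuous_Derive, Hin].
    + intros x Hx. apply Jstar_inside, Rabs_def1; lra.
    + apply (filter_imp (F := locally b) (fun x => - b < x));
        [intros x Hx Hlt; lra | apply open_gt; lra].
  - replace (Derive inside_form b) with (Derive right_form b)
      by (rewrite Derive_inside_form, Derive_right_form, smooth_fit; ring).
    apply (filterlim_Derive_ext_open _ _ (fun x => 0 < x) b (at_right b));
      [apply filter_le_within | apply open_gt | | | apply is_C1_continuous_Derive, Hright].
    + intros x Hx. apply g_of_pos, Hx.
    + apply (filter_forall (F := locally b)). intros x Hx. lra.
Qed.

Lemma Derive_one_sided_limits_at_opp_b :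
  exists L : R,
    filterlim (fun x => Derive (Jstar n Bs t) x) (at_right (- b)) (locally L) /\
    filterlim (fun x => Derive (g n Bs t) x) (at_left (- b)) (locally L).
Proof.
  pose proof boundary_pos. destruct is_C1_local_forms as [Hin [_ Hleft]].
  exists (Derive inside_form (- b)). split.
  - apply (filterlim_Derive_ext_open _ _ (fun x => - b < x < b) (- b) (at_right (- b)));
      [apply filter_le_within | apply open_and; [apply open_gt | apply open_lt] | | |
       apply is_C1_continuous_Derive, Hin].
    + intros x Hx. apply Jstar_inside, Rabs_def1; lra.
    + apply (filter_imp (F := locally (- b)) (fun x => x < b));
        [intros x Hx Hlt; lra | apply open_lt; lra].
  - replace (Derive inside_form (- b)) with (Derive left_form (- b)).
    2:{ rewrite Derive_inside_form, Derive_left_form, Ropp_involutive, smooth_fit.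
        replace ((- b) ^ (2 * n)) with (b ^ (2 * n)) by (rewrite !pow_mult; f_equal; ring).
        ring. }
    apply (filterlim_Derive_ext_open _ _ (fun x => x < 0) (- b) (at_left (- b)));
      [apply filter_le_within | apply open_lt | | | apply is_C1_continuous_Derive, Hleft].
    + intros x Hx. apply g_of_neg, Hx.
    + apply (filter_forall (F := locally (- b))). intros x Hx. lra.
Qed.

End SmoothFit.

Theorem lemma4p5 (n : nat) (Bs : R)
  (hBpos : 0 < Bs) (hBzero : Bstar_eq n Bs = 0)
  (hBuniq : forall B, 0 < B -> Bstar_eq n B = 0 -> B = Bs)
  (t : R) (ht0 : 0 <= t) (ht1 : t < 1) :
  (exists L : R,
     filterlim (fun x => Derive (Jstar n Bs t) x)
       (at_left (Bs * sqrt (1 - t))) (locally L) /\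
     filterlim (fun x => Derive (g n Bs t) x)
       (at_right (Bs * sqrt (1 - t))) (locally L)) /\
  (exists L : R,
     filterlim (fun x => Derive (Jstar n Bs t) x)
       (at_right (- (Bs * sqrt (1 - t)))) (locally L) /\
     filterlim (fun x => Derive (g n Bs t) x)
       (at_left (- (Bs * sqrt (1 - t)))) (locally L)).
Proof.
  split; [apply Derive_one_sided_limits_at_b | apply Derive_one_sided_limits_at_opp_b]; assumption.
Qed.
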